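(* Let $G$ be a connected cograph which is $k$-connected, and let $S$ be a minimal vertex separator of $G$ with $|S|=k$. Then every edge $\{u,v\}$ of $G\setminus S$ is universal to $S$, i.e. for every $s\in S$, $\{u,s\}\in E(G)$ or $\{v,s\}\in E(G)$.
   Context: A cograph is a graph that can be built from single vertices by repeatedly taking disjoint unions and joins; equivalently, a graph with no induced path on four vertices. $G\setminus S$ is the subgraph induced on $V(G)\setminus S$. A vertex separator of a connected graph $G$ is a set $S\subset V(G)$ such that $G\setminus S$ is disconnected; it is minimal if no proper subset of $S$ is a vertex separator; a minimum vertex separator is a minimal vertex separator of least size. The paper calls $G$ $k$-connected if there exists a minimum vertex separator of size $k$. *)

(* A finite simple graph is a symmetric irreflexive relation
   e : rel T on a finType T (vertex set = all of T). *)
From mathcomp Require Import all_boot.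
Set Implicit Arguments. Unset Strict Implicit. Unset Printing Implicit Defensive.

Section Graphs.
Variables (T : finType) (e : rel T).

Definition induced_rel (A : {set T}) : rel T :=
  [rel x y | [&& x \in A, y \in A & e x y]].

Definition connected_on (A : {set T}) : Prop :=
  forall x y, x \in A -> y \in A -> connect (induced_rel A) x y.

Definition graph_connected : Prop := connected_on setT.

Definition vertex_separator (S : {set T}) : Prop := ~ connected_on (~: S).

Definition minimal_vertex_separator (S : {set T}) : Prop :=
  vertex_separator S /\ forall S' : {set T}, S' \proper S -> ~ vertex_separator S'.

Definition minimum_vertex_separator (S : {set T}) : Prop :=
  minimal_vertex_separator S /\
  forall S' : {set T}, minimal_vertex_separator S' -> #|S| <= #|S'|.

(* the paper's "k-connected": there is a minimum vertex separator of size k *)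
Definition k_connected (k : nat) : Prop :=
  exists S, minimum_vertex_separator S /\ #|S| = k.

Definition induced_P4 (a b c d : T) : Prop :=
  uniq [:: a; b; c; d] /\ e a b /\ e b c /\ e c d /\
  ~~ e a c /\ ~~ e a d /\ ~~ e b d.

Definition cograph : Prop := forall a b c d, ~ induced_P4 a b c d.

End Graphs.

From mathcomp Require Import all_boot.
Set Implicit Arguments. Unset Strict Implicit. Unset Printing Implicit Defensive.

(* In a cograph every vertex s of a minimal separator S is adjacent to every
   vertex outside S.  By minimality, s has
   a neighbour in every component of G \ S (otherwise S \ s would still
   separate).  If s missed some vertex of the component C of u, walking inside
   C from it to a neighbour of s gives an edge xw of C with s ~ w but not
   s ~ x; together with a neighbour t of s in another component this yields
   the induced path x - w - s - t. *)

Lemma connect_crossing_edge (T : finType) (r : rel T) (P : pred T) u y :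
  connect r u y -> ~~ P u -> P y ->
  exists x w, [/\ connect r u x, r x w, ~~ P x & P w].
Proof.
move=> /connectP [p r_p ->]; elim: p u r_p => [|a p IHp] u /=.
  by move=> _ /negPf ->.
case/andP=> r_ua r_p nPu Py; case Pa: (P a).
  by exists u, a; split; rewrite ?connect0.
have [x [w [c_ax r_xw nPx Pw]]] := IHp a r_p (negbT Pa) Py.
by exists x, w; split; rewrite ?(connect_trans (connect1 r_ua) c_ax).
Qed.

Section CographSeparators.

Variables (T : finType) (e : rel T).
Hypothesis e_sym : symmetric e.

Lemma connect_induced_sym (A : {set T}) : connect_sym (induced_rel e A).
Proof.
by apply: sym_connect_sym => x y; rewrite /induced_rel /= e_sym andbCA.
Qed.

Lemma connect_induced_mem (A : {set T}) x y :
  connect (induced_rel e A) x y -> x \in A -> y \in A.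
Proof.
have clA : closed (induced_rel e A) [in A].
  by apply: (intro_closed (connect_induced_sym A)) => a b /and3P [].
by move=> c_xy; rewrite -[y \in A](closed_connect clA c_xy).
Qed.

Lemma connect_induced_setU1 (A : {set T}) s x z :
  x \in A -> (forall y, connect (induced_rel e A) x y -> ~~ e s y) ->
  connect (induced_rel e (s |: A)) x z -> connect (induced_rel e A) x z.
Proof.
move=> xA no_s c_xz.
have cl :
    closed (induced_rel e (s |: A)) [pred y | connect (induced_rel e A) x y].
  apply: (intro_closed (connect_induced_sym _)).
  move=> y w /and3P [_ wsA e_yw] c_xy.
  have yA := connect_induced_mem c_xy xA.
  have ws : w != s by apply: contraNneq (no_s y c_xy) => <-; rewrite e_sym.
  apply: connect_trans c_xy (connect1 _).
  rewrite /induced_rel /= yA e_yw andbT.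
  by move: wsA; rewrite in_setU1 (negbTE ws).
by have := closed_connect cl c_xz; rewrite !inE connect0 => <-.
Qed.

Lemma separator_unreachable (S : {set T}) x :
  vertex_separator e S -> x \in ~: S ->
  exists2 z, z \in ~: S & ~~ connect (induced_rel e (~: S)) x z.
Proof.
move=> sepS xS.
have [/forall_inP reach | /forall_inPn [z zS nxz]] :=
  boolP [forall z in ~: S, connect (induced_rel e (~: S)) x z]; last by exists z.
case: sepS => a b aS bS.
by apply: connect_trans (reach b bS); rewrite connect_induced_sym reach.
Qed.

Lemma minimal_separator_neighbour_in_component (S : {set T}) s x :
  minimal_vertex_separator e S -> s \in S -> x \notin S ->
  exists2 y, connect (induced_rel e (~: S)) x y & e s y.
Proof.
move=> [sepS minS] sS xS.
have [/existsP [y /andP [c_xy e_sy]] | no_nbr] :=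
  boolP [exists y, connect (induced_rel e (~: S)) x y && e s y].
  by exists y.
exfalso; apply: (minS _ (properD1 sS)) => conn.
have xS' : x \in ~: S by rewrite inE.
have [z zS /negP] := separator_unreachable sepS xS'; apply.
apply: (connect_induced_setU1 (s := s) xS').
  move=> y c_xy; apply: contraNN no_nbr => e_sy.
  by apply/existsP; exists y; rewrite c_xy.
by rewrite -setUC -setCD; apply: conn; rewrite setCD inE ?xS' ?zS.
Qed.

Hypothesis e_irr : irreflexive e.

Lemma induced_P4_of_edges a b c d :
  e a b -> e b c -> e c d -> ~~ e a c -> ~~ e a d -> ~~ e b d ->
  induced_P4 e a b c d.
Proof.
move=> ab bc cd nac nad nbd; do !split=> //.
have edge_neq x y : e x y -> x != y by apply: contraTneq => ->; rewrite e_irr.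
have ac : a != c by apply: contraNneq nad => ->.
have ad : a != d by apply: contraNneq nac => ->; rewrite e_sym.
have bd : b != d by apply: contraNneq nad => <-.
by rewrite /= !inE !negb_or ac ad bd !edge_neq.
Qed.

Lemma cograph_minimal_separator_complete (S : {set T}) s u :
  cograph e -> minimal_vertex_separator e S -> s \in S -> u \notin S -> e s u.
Proof.
move=> cog minsepS sS uS; have uS' : u \in ~: S by rewrite inE.
have [y c_uy e_sy] := minimal_separator_neighbour_in_component minsepS sS uS.
apply: contraT => nsu.
have [x [w [c_ux r_xw nsx e_sw]]] := connect_crossing_edge c_uy nsu e_sy.
have c_uw := connect_trans c_ux (connect1 r_xw).
have [z zS nuz] := separator_unreachable minsepS.1 uS'.
have [t c_zt e_st] : exists2 t, connect (induced_rel e (~: S)) z t & e s t.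
  by apply: minimal_separator_neighbour_in_component; rewrite -?in_setC.
have tS := connect_induced_mem c_zt zS.
have far v : connect (induced_rel e (~: S)) u v -> ~~ e v t.
  move=> c_uv; move: nuz; apply: contraNN => e_vt.
  have vS := connect_induced_mem c_uv uS'.
  have r_vt : induced_rel e (~: S) v t by rewrite /induced_rel /= vS tS.
  apply: connect_trans (connect_trans c_uv (connect1 r_vt)) _.
  by rewrite connect_induced_sym.
case: (cog x w s t); apply: induced_P4_of_edges; rewrite ?far // -?(e_sym s) //.
by case/and3P: r_xw.
Qed.

End CographSeparators.

Theorem corollary1 (T : finType) (e : rel T)
    (e_sym : symmetric e) (e_irr : irreflexive e)
    (Hco : cograph e) (Hconn : graph_connected e)
    (k : nat) (Hk : k_connected e k)
    (S : {set T}) (HS : minimal_vertex_separator e S) (HSk : #|S| = k) :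
  forall u v, u \notin S -> v \notin S -> e u v ->
    forall s, s \in S -> e u s || e v s.
Proof.
move=> u v uS _ _ s sS.
by rewrite e_sym (cograph_minimal_separator_complete e_sym e_irr Hco HS sS uS).
Qed.
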